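(* Let $\mathcal{R}$ be a right amenable cell space with finite stabiliser $G_0$, and let $(\mathcal{R},Q,N,\delta)$ be a semi-cellular automaton with $Q$ finite and nonempty and $N$ finite, whose global transition function $\Delta$ is not surjective. Then there is a Garden of Eden pattern with nonempty finite domain, i.e. a nonempty finite $F\subseteq M$ and $p\colon F\to Q$ such that $\Delta(c)|_F\neq p$ for every $c\in Q^M$.
   Context: A cell space $\mathcal{R}$ consists of a group $G$ acting transitively on the left on a nonempty set $M$ via $\triangleright$, a point $m_0\in M$ and a family $(g_{m_0,m})_{m\in M}$ in $G$ with $g_{m_0,m}\triangleright m_0=m$. $G_0$ is the stabiliser of $m_0$, $G/G_0$ the set of left cosets, with $G$ acting by $g\cdot hG_0=ghG_0$. The right semi-action $\triangleleft\colon M\times G/G_0\to M$ is $m\triangleleft gG_0=g_{m_0,m}g\triangleright m_0$. $\mathcal{R}$ is right amenable if there is a finitely additive probability measure $\mu$ on the power set of $M$ such that $\mu(\{a\triangleleft\mathfrak{g}:a\in A\})=\mu(A)$ whenever $\mathfrak{g}\in G/G_0$, $A\subseteq M$ and $m\mapsto m\triangleleft\mathfrak{g}$ is injective on $A$. A semi-cellular automaton is $(\mathcal{R},Q,N,\delta)$ with $Q$ a set, $N\subseteq G/G_0$ with $G_0\cdot N\subseteq N$, $\delta\colon Q^N\to Q$; its global transition function is $\Delta(c)(m)=\delta(n\mapsto c(m\triangleleft n))$. *)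

From Stdlib Require Import Reals List ClassicalEpsilon.
Set Implicit Arguments.
Open Scope R_scope.

Record cell_space := CellSpace {
  cs_G : Type;
  cs_M : Type;
  cs_mul : cs_G -> cs_G -> cs_G;
  cs_one : cs_G;
  cs_inv : cs_G -> cs_G;
  cs_act : cs_G -> cs_M -> cs_M;
  cs_m0 : cs_M;
  cs_gm : cs_M -> cs_G;
  cs_mulA : forall a b c, cs_mul a (cs_mul b c) = cs_mul (cs_mul a b) c;
  cs_mul1g : forall a, cs_mul cs_one a = a;
  cs_mulg1 : forall a, cs_mul a cs_one = a;
  cs_mulVg : forall a, cs_mul (cs_inv a) a = cs_one;
  cs_mulgV : forall a, cs_mul a (cs_inv a) = cs_one;
  cs_act1 : forall m, cs_act cs_one m = m;
  cs_actM : forall g h m, cs_act (cs_mul g h) m = cs_act g (cs_act h m);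
  cs_transitive : forall m m', exists g, cs_act g m = m';
  cs_gmP : forall m, cs_act (cs_gm m) cs_m0 = m
}.

Section CellSpaceDefs.
Variable CS : cell_space.
Local Notation G := (cs_G CS).
Local Notation M := (cs_M CS).

Definition stab (g : G) : Prop := cs_act CS g (cs_m0 CS) = cs_m0 CS.

Definition lcoset (g : G) : G -> Prop :=
  fun h => exists k, stab k /\ h = cs_mul CS g k.

Definition coset_space : Type := {A : G -> Prop | exists g, A = lcoset g}.

Definition mkcoset (g : G) : coset_space :=
  exist _ (lcoset g) (ex_intro _ g eq_refl).

Definition crepr (x : coset_space) : G :=
  proj1_sig (constructive_indefinite_description _ (proj2_sig x)).

Definition cact (g : G) (x : coset_space) : coset_space :=
  mkcoset (cs_mul CS g (crepr x)).

(** Right semi-action  m <| gG_0 = g_{m0,m} g |> m0 (independent of the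
    representative). *)
Definition rsemi (m : M) (x : coset_space) : M :=
  cs_act CS (cs_mul CS (cs_gm CS m) (crepr x)) (cs_m0 CS).

Definition finite_set {T : Type} (A : T -> Prop) : Prop :=
  exists l : list T, forall x, A x -> In x l.

Definition finite_type (T : Type) : Prop :=
  exists l : list T, forall x : T, In x l.

Definition right_amenable : Prop :=
  exists mu : (M -> Prop) -> R,
    (forall A, 0 <= mu A) /\
    mu (fun _ => True) = 1 /\
    (forall A B, (forall m, A m -> B m -> False) ->
       mu (fun m => A m \/ B m) = mu A + mu B) /\
    (forall (x : coset_space) (A : M -> Prop),
       (forall a b, A a -> A b -> rsemi a x = rsemi b x -> a = b) ->
       mu (fun m => exists a, A a /\ m = rsemi a x) = mu A).

Definition global_transition {Q : Type} (N : coset_space -> Prop)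
  (delta : ({n : coset_space | N n} -> Q) -> Q) (c : M -> Q) : M -> Q :=
  fun m => delta (fun n => c (rsemi m (proj1_sig n))).

End CellSpaceDefs.

Arguments stab {CS} g.
Arguments cact {CS} g x.
Arguments rsemi {CS} m x.
Arguments global_transition {CS Q} N delta c m.

From Stdlib Require Import Reals List Classical ClassicalEpsilon FunctionalExtensionality.
From mathcomp Require classical_sets.
Set Implicit Arguments.

(* If every finite pattern occurs in some image Δ(c), then every configuration
   d is an image: the conditions Δ(c)(m) = d(m) each involve only the finitely
   many cells m ◁ n (n ∈ N), and the space Q^M of configurations is compact
   because Q is finite.  Compactness is used in the form of the compactness
   theorem of propositional logic: a maximal consistent partial assignment,
   which exists by Zorn's lemma, is total. *)

Section Compactness.
Variables (I M Q : Type) (P : I -> (M -> Q) -> Prop).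

Definition depends_only_on (K : list M) (p : (M -> Q) -> Prop) : Prop :=
  forall c c', (forall x, In x K -> c x = c' x) -> p c -> p c'.

Hypothesis Q_finite : finite_type Q.
Hypothesis P_local : forall i, exists K, depends_only_on K (P i).
Hypothesis P_finitely_satisfiable :
  forall L : list I, exists c, forall i, In i L -> P i c.

Definition agrees_on (A : M * Q -> Prop) (K : list M) (c : M -> Q) : Prop :=
  forall x q, In x K -> A (x, q) -> c x = q.

(* Partial assignments of states to cells are encoded as relations
   [A : M * Q -> Prop]; consistency makes them functional. *)
Definition consistent (A : M * Q -> Prop) : Prop :=
  forall (L : list I) (K : list M),
    exists c, agrees_on A K c /\ forall i, In i L -> P i c.

Lemma consistent_functional A x q q' :
  consistent A -> A (x, q) -> A (x, q') -> q = q'.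
Proof.
intros HA Hq Hq'.
destruct (HA nil (x :: nil)) as [c [Hc _]].
rewrite <- (Hc x q), <- (Hc x q'); simpl; auto.
Qed.

Section Chain.
Variable F : (M * Q -> Prop) -> Prop.
Hypothesis F_consistent : forall X, F X -> consistent X.
Hypothesis F_chain : classical_sets.total_on F classical_sets.subset.

Let U (a : M * Q) : Prop := exists2 X, F X & X a.

Lemma chain_union_functional x q q' : U (x, q) -> U (x, q') -> q = q'.
Proof.
intros [X FX Xq] [Y FY Yq'].
destruct (F_chain FX FY) as [XY | YX].
- exact (@consistent_functional Y x q q' (F_consistent FY) (XY _ Xq) Yq').
- exact (@consistent_functional X x q q' (F_consistent FX) Xq (YX _ Yq')).
Qed.

Lemma chain_member_agrees_on X0 (K : list M) :
  F X0 -> exists2 Z, F Z & forall x q, In x K -> U (x, q) -> Z (x, q).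
Proof.
intros FX0; induction K as [|x K [Z FZ HZ]].
- exists X0; [exact FX0 | intros x q []].
- destruct (classic (exists q, U (x, q))) as [[q [Y FY Yq]] | Hx].
  + assert (upper : exists2 W, F W & (forall a, Y a -> W a) /\
                                     (forall a, Z a -> W a)).
    { destruct (F_chain FY FZ) as [YZ | ZY];
        [exists Z | exists Y]; auto; split; auto. }
    destruct upper as [W FW [YW ZW]]; exists W; [exact FW|].
    intros x' q' [<- | Hx'] Uq'.
    * rewrite (chain_union_functional Uq' (ex_intro2 _ _ Y FY Yq)); auto.
    * auto.
  + exists Z; [exact FZ|].
    intros x' q' [<- | Hx'] Hq'; [exfalso; eauto | auto].
Qed.

Lemma consistent_chain_union : consistent U.
Proof.
intros L K.
destruct (classic (exists X0, F X0)) as [[X0 FX0] | HF].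
- destruct (chain_member_agrees_on K FX0) as [Z FZ HZ].
  destruct (F_consistent FZ L K) as [c [Hc HL]].
  exists c; split; [intros x q Hx HU; apply Hc, HZ | ]; auto.
- destruct (P_finitely_satisfiable L) as [c Hc].
  exists c; split; [intros x q _ [X FX _]; exfalso; eauto | exact Hc].
Qed.

End Chain.

Lemma consistent_extend A x :
  consistent A -> exists q, consistent (fun a => A a \/ a = (x, q)).
Proof.
intros HA; apply NNPP; intros Hno.
assert (excluded : forall ls : list Q, exists L K, forall c,
          agrees_on A K c -> (forall i, In i L -> P i c) -> ~ In (c x) ls).
{ induction ls as [|q ls [L [K HLK]]].
  - exists nil, nil; intros c _ _ [].
  - assert (Hq : ~ consistent (fun a => A a \/ a = (x, q))) by eauto.
    apply not_all_ex_not in Hq; destruct Hq as [Lq Hq].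
    apply not_all_ex_not in Hq; destruct Hq as [Kq Hq].
    exists (L ++ Lq), (K ++ Kq); intros c Hc HL [Hcx | Hin].
    + apply Hq; exists c; split.
      * intros y q' Hy [HAy | Hyq].
        -- apply Hc; [apply in_or_app; auto | exact HAy].
        -- injection Hyq; intros -> ->; auto.
      * intros i Hi; apply HL, in_or_app; auto.
    + apply (HLK c); auto.
      * intros y q' Hy; apply Hc, in_or_app; auto.
      * intros i Hi; apply HL, in_or_app; auto. }
destruct Q_finite as [lq lqP], (excluded lq) as [L [K HLK]].
destruct (HA L K) as [c [Hc HL]].
exact (HLK c Hc HL (lqP (c x))).
Qed.

Lemma consistent_maximal_total A :
  consistent A -> (forall B, classical_sets.proper A B -> ~ consistent B) ->
  forall x, exists q, A (x, q).
Proof.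
intros HA Amax x.
destruct (consistent_extend x HA) as [q Hq]; exists q.
apply NNPP; intros Hx; refine (Amax _ _ Hq); split.
- intros a Ha; left; exact Ha.
- intros HB; apply Hx, HB; right; reflexivity.
Qed.

Theorem satisfiable_of_finitely_satisfiable : exists c, forall i, P i c.
Proof.
destruct (classical_sets.Zorn_bigcup (P := consistent)) as [A [HA Amax]].
{ intros F FP Fchain; exact (consistent_chain_union FP Fchain). }
pose proof (consistent_maximal_total HA Amax) as Atot.
exists (fun x => proj1_sig (constructive_indefinite_description _ (Atot x))).
intros i; destruct (P_local i) as [K HK].
destruct (HA (i :: nil) K) as [c [Hc HL]].
apply (HK c); [|apply HL; left; reflexivity].
intros x Hx.
destruct (constructive_indefinite_description _ (Atot x)) as [q Hq]; simpl.
exact (Hc x q Hx Hq).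
Qed.

End Compactness.

Lemma global_transition_local (CS : cell_space) (Q : Type)
  (N : coset_space CS -> Prop) (delta : ({n | N n} -> Q) -> Q) (m : cs_M CS) :
  finite_set N ->
  exists K, forall c c', (forall x, In x K -> c x = c' x) ->
    global_transition N delta c m = global_transition N delta c' m.
Proof.
intros [lN lNP].
exists (map (fun n => rsemi m n) lN); intros c c' Hcc'.
unfold global_transition; f_equal; apply functional_extensionality; intros n.
apply Hcc', in_map, lNP, (proj2_sig n).
Qed.

Theorem lemma10 (CS : cell_space) (Q : Type)
  (N : coset_space CS -> Prop)
  (delta : ({n : coset_space CS | N n} -> Q) -> Q) :
  right_amenable CS ->
  finite_set (@stab CS) ->
  finite_type Q -> inhabited Q ->
  finite_set N ->
  (forall (g0 : cs_G CS) n, stab g0 -> N n -> N (cact g0 n)) ->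
  ~ (forall d : cs_M CS -> Q, exists c, global_transition N delta c = d) ->
  exists F : cs_M CS -> Prop,
    (exists m, F m) /\ finite_set F /\
    exists p : {m : cs_M CS | F m} -> Q,
      forall c : cs_M CS -> Q,
        ~ (forall m : {m : cs_M CS | F m},
             global_transition N delta c (proj1_sig m) = p m).
Proof.
intros _ _ Q_finite [q0] N_finite _ not_surjective.
apply NNPP; intros no_garden_of_eden; apply not_surjective; intros d.
assert (finite_patterns_realizable : forall L : list (cs_M CS), exists c,
          forall m, In m L -> global_transition N delta c m = d m).
{ intros [|m0 L]; [exists (fun _ => q0); intros m []|].
  apply NNPP; intros Hno; apply no_garden_of_eden.
  exists (fun m => In m (m0 :: L)); split; [exists m0; left; reflexivity|].
  split; [exists (m0 :: L); auto|].
  exists (fun m => d (proj1_sig m)); intros c Hc; apply Hno.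
  exists c; intros m Hm; exact (Hc (exist _ m Hm)). }
destruct (satisfiable_of_finitely_satisfiable
            (fun m c => global_transition N delta c m = d m) Q_finite)
  as [c Hc]; [| exact finite_patterns_realizable |].
- intros m; destruct (global_transition_local delta m N_finite) as [K HK].
  exists K; intros c c' Hcc' Hc; rewrite <- (HK c c' Hcc'); exact Hc.
- exists c; apply functional_extensionality; exact Hc.
Qed.
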